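(* Let $[t_0,t_1]$ be an admissible segment of $\mathbf r$ with associated tetrahedron $\mathbf r_0\mathbf r_1\mathbf r_2\mathbf r_3$. For any $t^\star\in(t_0,t_1)$ let $\mathbf r_0\mathbf r_1^\star\mathbf r_2^\star\mathbf r_3^\star$ be the associated tetrahedron of the sub-segment $[t_0,t^\star]$. Then (a) $\mathbf r_1^\star$ and $\mathbf r_1$ lie on the same side of $\mathbf r_0$ on the tangent line $T^+(t_0)$; (b) $\mathbf r_2^\star$ and $\mathbf r_2$ lie on the same side of the line $T^+(t_0)$ within the osculating plane $O^+(t_0)$.
   Context: Setting: $\mathbf r(t)=(x(t),y(t),z(t))$ with $x,y,z$ rational functions with real coefficients whose denominators do not vanish on the parameter interval, properly parametrized, and not contained in a plane. Curvature $\kappa=\|\mathbf r'\times\mathbf r''\|/\|\mathbf r'\|^3$; torsion $\tau$ vanishes exactly where $\det(\mathbf r',\mathbf r'',\mathbf r''')=0$. Unit tangent $\boldsymbol\alpha=\mathbf r'/\|\mathbf r'\|$, unit binormal $\boldsymbol\gamma=\mathbf r'\times\mathbf r''/\|\mathbf r'\times\mathbf r''\|$; one-sided limits $\boldsymbol\alpha^{\pm}(s)=\lim_{t\to s^\pm}\boldsymbol\alpha(t)$, $\boldsymbol\gamma^{\pm}(s)=\lim_{t\to s^\pm}\boldsymbol\gamma(t)$; tangent lines $T^{\pm}(s)=\{\mathbf r(s)+\lambda\boldsymbol\alpha^{\pm}(s)\}$, osculating planes $O^{\pm}(s)=\{X:(X-\mathbf r(s))\cdot\boldsymbol\gamma^{\pm}(s)=0\}$.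 A point is singular if it corresponds to more than one parameter counted with multiplicity; character points are singular points, inflections ($\kappa=0$) and torsion-vanishing points ($\tau=0$). Associated tetrahedron of $[a,b]$: vertices $\mathbf r(a)$, $T^+(a)\cap L$, $T^-(b)\cap L$, $\mathbf r(b)$ where $L=O^+(a)\cap O^-(b)$. Admissible segment: $t_0<t_1$, no parameter in $(t_0,t_1]$ gives a character point, and for all $t_0\le s_1<s_2\le t_1$: (I) $\boldsymbol\alpha^+(s_1)\cdot\boldsymbol\gamma^-(s_2)\ne0$ and $\boldsymbol\alpha^-(s_2)\cdot\boldsymbol\gamma^+(s_1)\ne0$; (II) $(\boldsymbol\alpha^+(s_1)\times(\mathbf r(s_2)-\mathbf r(s_1)))\cdot\boldsymbol\alpha^-(s_2)\ne0$; (III) $(\mathbf r(s_1)-\mathbf r(s_2))\cdot\boldsymbol\gamma^-(s_2)\ne0$ and $(\mathbf r(s_2)-\mathbf r(s_1))\cdot\boldsymbol\gamma^+(s_1)\ne0$; and (IV) for all $t_0\le s_1<s_2<s_3\le t_1$, $\det(\boldsymbol\alpha(s_1),\boldsymbol\alpha(s_2),\boldsymbol\alpha(s_3))\ne0$ (one-sided limits used at $t_0,t_1$). *)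

From Stdlib Require Import Reals List.
Open Scope R_scope.

Record V3 := mkV { vx : R; vy : R; vz : R }.
Definition vadd (u v : V3) : V3 := mkV (vx u + vx v) (vy u + vy v) (vz u + vz v).
Definition vsub (u v : V3) : V3 := mkV (vx u - vx v) (vy u - vy v) (vz u - vz v).
Definition vscale (c : R) (u : V3) : V3 := mkV (c * vx u) (c * vy u) (c * vz u).
Definition dot (u v : V3) : R := vx u * vx v + vy u * vy v + vz u * vz v.
Definition cross (u v : V3) : V3 :=
  mkV (vy u * vz v - vz u * vy v) (vz u * vx v - vx u * vz v) (vx u * vy v - vy u * vx v).
Definition vnorm (u : V3) : R := sqrt (dot u u).
Definition det3 (u v w : V3) : R := dot (cross u v) w.
Definition v0 : V3 := mkV 0 0 0.

(* ---------- real polynomials (coefficient lists, low degree first) ---------- *)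
Fixpoint peval (p : list R) (x : R) : R :=
  match p with nil => 0 | c :: q => c + x * peval q x end.
Fixpoint padd (p q : list R) : list R :=
  match p, q with
  | nil, _ => q
  | _, nil => p
  | a :: p', b :: q' => (a + b) :: padd p' q'
  end.
Definition pscale (c : R) (p : list R) : list R := map (Rmult c) p.
Fixpoint pmul (p q : list R) : list R :=
  match p with nil => nil | a :: p' => padd (pscale a q) (0 :: pmul p' q) end.
Definition psub (p q : list R) : list R := padd p (pscale (-1) q).
Fixpoint pderiv_aux (n : nat) (p : list R) : list R :=
  match p with nil => nil | c :: q => (INR n * c) :: pderiv_aux (S n) q end.
Definition pderiv (p : list R) : list R :=
  match p with nil => nil | _ :: q => pderiv_aux 1 q end.

Record rfun := mkRF { rnum : list R; rden : list R }.
Definition rf_eval (f : rfun) (t : R) : R := peval (rnum f) t / peval (rden f) t.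
(* quotient rule: (p/q)' = (p' q - p q') / q^2 (exact wherever q <> 0) *)
Definition rf_deriv (f : rfun) : rfun :=
  mkRF (psub (pmul (pderiv (rnum f)) (rden f)) (pmul (rnum f) (pderiv (rden f))))
       (pmul (rden f) (rden f)).

Record rcurve := mkC { cx : rfun; cy : rfun; cz : rfun }.
Definition ceval (C : rcurve) (t : R) : V3 :=
  mkV (rf_eval (cx C) t) (rf_eval (cy C) t) (rf_eval (cz C) t).
Definition cderiv (C : rcurve) : rcurve :=
  mkC (rf_deriv (cx C)) (rf_deriv (cy C)) (rf_deriv (cz C)).
Definition r0' (C : rcurve) := ceval C.
Definition r1' (C : rcurve) := ceval (cderiv C).
Definition r2' (C : rcurve) := ceval (cderiv (cderiv C)).
Definition r3' (C : rcurve) := ceval (cderiv (cderiv (cderiv C))).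

Definition curvature (C : rcurve) (t : R) : R :=
  vnorm (cross (r1' C t) (r2' C t)) / (vnorm (r1' C t)) ^ 3.
Definition alpha (C : rcurve) (t : R) : V3 := vscale (/ vnorm (r1' C t)) (r1' C t).
Definition gamma (C : rcurve) (t : R) : V3 :=
  vscale (/ vnorm (cross (r1' C t) (r2' C t))) (cross (r1' C t) (r2' C t)).

Definition rlim (f : R -> V3) (s : R) (l : V3) : Prop :=
  forall eps, 0 < eps -> exists delta, 0 < delta /\
    forall t, s < t < s + delta -> vnorm (vsub (f t) l) < eps.
Definition llim (f : R -> V3) (s : R) (l : V3) : Prop :=
  forall eps, 0 < eps -> exists delta, 0 < delta /\
    forall t, s - delta < t < s -> vnorm (vsub (f t) l) < eps.

Definition is_interval (I : R -> Prop) : Prop :=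
  forall x y z, I x -> I z -> x <= y <= z -> I y.

Definition dens_nonvanishing (C : rcurve) (I : R -> Prop) : Prop :=
  forall t, I t ->
    peval (rden (cx C)) t <> 0 /\ peval (rden (cy C)) t <> 0 /\ peval (rden (cz C)) t <> 0.

(* complex numbers as pairs, used for properness of the parametrization *)
Definition Cx := (R * R)%type.
Definition cadd (z w : Cx) : Cx := (fst z + fst w, snd z + snd w).
Definition cmul (z w : Cx) : Cx :=
  (fst z * fst w - snd z * snd w, fst z * snd w + snd z * fst w).
Fixpoint cpeval (p : list R) (z : Cx) : Cx :=
  match p with nil => (0, 0) | c :: q => cadd (c, 0) (cmul z (cpeval q z)) end.
(* f(s) = f(t) for a rational function, cleared of denominators *)
Definition rf_ceq (f : rfun) (s t : Cx) : Prop :=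
  cmul (cpeval (rnum f) s) (cpeval (rden f) t) = cmul (cpeval (rnum f) t) (cpeval (rden f) s).
Definition rf_cdef (f : rfun) (z : Cx) : Prop := cpeval (rden f) z <> (0, 0).

(* proper (birational) parametrization: apart from finitely many parameter
   values t in C, the point r(t) has no other (complex) preimage *)
Definition proper_param (C : rcurve) : Prop :=
  exists E : list Cx, forall t s : Cx, ~ In t E ->
    rf_cdef (cx C) t -> rf_cdef (cy C) t -> rf_cdef (cz C) t ->
    rf_cdef (cx C) s -> rf_cdef (cy C) s -> rf_cdef (cz C) s ->
    rf_ceq (cx C) s t -> rf_ceq (cy C) s t -> rf_ceq (cz C) s t -> s = t.

Definition not_planar (C : rcurve) (I : R -> Prop) : Prop :=
  ~ exists (n : V3) (c : R), n <> v0 /\ forall t, I t -> dot n (r0' C t) = c.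

Definition standing (C : rcurve) (I : R -> Prop) : Prop :=
  is_interval I /\ dens_nonvanishing C I /\ proper_param C /\ not_planar C I.

(* singular: the point corresponds to more than one parameter counted with
   multiplicity (another parameter in I, or a cusp r'(t) = 0) *)
Definition singular_param (C : rcurve) (I : R -> Prop) (t : R) : Prop :=
  (exists s, I s /\ s <> t /\ r0' C s = r0' C t) \/ r1' C t = v0.
Definition character_param (C : rcurve) (I : R -> Prop) (t : R) : Prop :=
  singular_param C I t \/ curvature C t = 0 \/
  det3 (r1' C t) (r2' C t) (r3' C t) = 0.

Definition admissible (C : rcurve) (I : R -> Prop) (t0 t1 : R) : Prop :=
  I t0 /\ I t1 /\ t0 < t1 /\
  (forall t, t0 < t <= t1 -> ~ character_param C I t) /\
  (forall s1 s2, t0 <= s1 -> s1 < s2 -> s2 <= t1 ->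
    forall ap1 gp1 am2 gm2,
      rlim (alpha C) s1 ap1 -> rlim (gamma C) s1 gp1 ->
      llim (alpha C) s2 am2 -> llim (gamma C) s2 gm2 ->
      (* (I) *)
      (dot ap1 gm2 <> 0 /\ dot am2 gp1 <> 0) /\
      (* (II) *)
      dot (cross ap1 (vsub (r0' C s2) (r0' C s1))) am2 <> 0 /\
      (* (III) *)
      (dot (vsub (r0' C s1) (r0' C s2)) gm2 <> 0 /\
       dot (vsub (r0' C s2) (r0' C s1)) gp1 <> 0)) /\
  (* (IV), with one-sided limits at the ends *)
  (forall s1 s2 s3, t0 <= s1 -> s1 < s2 -> s2 < s3 -> s3 <= t1 ->
    forall a1 a3, rlim (alpha C) s1 a1 -> llim (alpha C) s3 a3 ->
      det3 a1 (alpha C s2) a3 <> 0).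

Definition on_line (p d X : V3) : Prop := exists lam, X = vadd p (vscale lam d).
Definition on_plane (p n X : V3) : Prop := dot (vsub X p) n = 0.

(* Vertex T^+(a) ∩ L of the associated tetrahedron of [a,b], where
   L = O^+(a) ∩ O^-(b); aa = alpha^+(a), ga = gamma^+(a), gb = gamma^-(b). *)
Definition tet_v1 (C : rcurve) (a b : R) (aa ga gb X : V3) : Prop :=
  on_line (r0' C a) aa X /\ on_plane (r0' C a) ga X /\ on_plane (r0' C b) gb X.
(* Vertex T^-(b) ∩ L; ab = alpha^-(b). *)
Definition tet_v2 (C : rcurve) (a b : R) (ga ab gb X : V3) : Prop :=
  on_line (r0' C b) ab X /\ on_plane (r0' C a) ga X /\ on_plane (r0' C b) gb X.

Definition same_side_on_line (p P Q : V3) : Prop :=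
  P <> p /\ exists mu, 0 < mu /\ vsub Q p = vscale mu (vsub P p).
Definition same_side_in_plane (p d n P Q : V3) : Prop :=
  det3 d (vsub P p) n * det3 d (vsub Q p) n > 0.

(* Both vertices are described by one real function of the right endpoint s:
   - r1(s) = r(t0) + lambda(s) a0 lies on T^+(t0), where
       lambda(s) = ((r(s) - r(t0)).gamma(s)) / (a0.gamma(s));
   - r2(s) = T(s) cut by O^+(t0), and its side of T^+(t0) inside O^+(t0) is
     the sign of  det(a0, r2(s) - r(t0), g0).
   On (t0,t1] every point is regular (no character points), so r, alpha and
   gamma are continuous there and one-sided limits are plain values.
   Admissibility conditions (I) and (III) make lambda continuous and nonzero,
   (I) and (II) do the same for the determinant.  By the intermediate value
   theorem both functions keep their sign on [ts,t1], which is the claim. *)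
From Stdlib Require Import Reals List Lra Ranalysis5.
Open Scope R_scope.

(* Pointwise forms of the Stdlib continuity rules, which are stated for
   function operations and do not unify with lambda terms. *)
Lemma cont_plus f g x :
  continuity_pt f x -> continuity_pt g x -> continuity_pt (fun t => f t + g t) x.
Proof. exact (continuity_pt_plus f g x). Qed.
Lemma cont_minus f g x :
  continuity_pt f x -> continuity_pt g x -> continuity_pt (fun t => f t - g t) x.
Proof. exact (continuity_pt_minus f g x). Qed.
Lemma cont_mult f g x :
  continuity_pt f x -> continuity_pt g x -> continuity_pt (fun t => f t * g t) x.
Proof. exact (continuity_pt_mult f g x). Qed.
Lemma cont_inv f x : continuity_pt f x -> f x <> 0 -> continuity_pt (fun t => / f t) x.
Proof. exact (continuity_pt_inv f x). Qed.
Lemma cont_div f g x :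
  continuity_pt f x -> continuity_pt g x -> g x <> 0 -> continuity_pt (fun t => f t / g t) x.
Proof. exact (continuity_pt_div f g x). Qed.
Lemma cont_const c x : continuity_pt (fun _ => c) x.
Proof. exact (continuity_pt_const (fun _ => c) x (fun _ _ => eq_refl)). Qed.
Lemma cont_id x : continuity_pt (fun t => t) x.
Proof. exact (derivable_continuous_pt id x (derivable_pt_id x)). Qed.
Lemma cont_sqrt f x : continuity_pt f x -> 0 <= f x -> continuity_pt (fun t => sqrt (f t)) x.
Proof. intros Hf Hpos. exact (continuity_pt_comp f sqrt x Hf (continuity_pt_sqrt _ Hpos)). Qed.

(* Continuity at x in the epsilon-delta form, the point x itself included. *)
Lemma continuity_pt_eps f x : continuity_pt f x -> forall eps, 0 < eps ->
  exists d, 0 < d /\ forall t, Rabs (t - x) < d -> Rabs (f t - f x) < eps.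
Proof.
  intros H eps He. destruct (H eps He) as [d [Hd Hf]]. exists d; split; auto.
  intros t Ht. destruct (Req_dec x t) as [<-|Hne].
  - replace (f x - f x) with 0 by ring. rewrite Rabs_R0; auto.
  - apply (Hf t). split; [split; [exact I | exact Hne] | exact Ht].
Qed.

Lemma eps_continuity_pt f x : (forall eps, 0 < eps ->
  exists d, 0 < d /\ forall t, Rabs (t - x) < d -> Rabs (f t - f x) < eps) ->
  continuity_pt f x.
Proof.
  intros H eps He. destruct (H eps He) as [d [Hd Hf]]. exists d; split; auto.
  intros t [_ Ht]. apply Hf. exact Ht.
Qed.

Lemma dot_ge0 u : 0 <= dot u u.
Proof. unfold dot; nra. Qed.

Lemma dot_pos u : u <> v0 -> 0 < dot u u.
Proof.
  intros H. destruct u as [a b c]. unfold dot; simpl.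
  destruct (Req_dec a 0); destruct (Req_dec b 0); destruct (Req_dec c 0); subst;
    try (exfalso; apply H; reflexivity); nra.
Qed.

Lemma vnorm_pos u : u <> v0 -> 0 < vnorm u.
Proof. intros H; unfold vnorm; apply sqrt_lt_R0, dot_pos, H. Qed.

Lemma vnorm_v0 : vnorm v0 = 0.
Proof. unfold vnorm, dot; simpl. replace (0*0+0*0+0*0) with 0 by ring. apply sqrt_0. Qed.

Lemma vnorm_lt_of_coords u e : 0 < e ->
  Rabs (vx u) < e/2 -> Rabs (vy u) < e/2 -> Rabs (vz u) < e/2 -> vnorm u < e.
Proof.
  intros He H1 H2 H3. unfold vnorm. rewrite <- (sqrt_Rsqr e) by lra.
  apply sqrt_lt_1_alt. split; [apply dot_ge0|].
  destruct u as [a b c]; unfold dot, Rsqr; simpl in *.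
  apply Rabs_def2 in H1; apply Rabs_def2 in H2; apply Rabs_def2 in H3. nra.
Qed.

(* The coordinate functions are linear and dominated by the norm; this is all
   the limit arguments below need to know about them. *)
Definition coordinate (p : V3 -> R) : Prop :=
  (forall u, Rabs (p u) <= vnorm u) /\ (forall u v, p (vsub u v) = p u - p v).

Lemma coordinates : coordinate vx /\ coordinate vy /\ coordinate vz.
Proof.
  assert (B : forall c u, c * c <= dot u u -> Rabs c <= vnorm u) by
    (intros c u H; unfold vnorm; rewrite <- sqrt_Rsqr_abs; apply sqrt_le_1_alt; exact H).
  split; [|split]; (split; [intro u; destruct u; apply B; unfold dot; simpl; nra
                          | reflexivity]).
Qed.

Lemma V3_coord_eq u v : vx u = vx v -> vy u = vy v -> vz u = vz v -> u = v.
Proof. destruct u, v; simpl; intros -> -> ->; reflexivity. Qed.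

Definition vc (f : R -> V3) (x : R) : Prop :=
  continuity_pt (fun t => vx (f t)) x /\ continuity_pt (fun t => vy (f t)) x /\
  continuity_pt (fun t => vz (f t)) x.

Lemma vc_const c x : vc (fun _ => c) x.
Proof. split; [|split]; apply cont_const. Qed.
Lemma vc_add f g x : vc f x -> vc g x -> vc (fun t => vadd (f t) (g t)) x.
Proof. intros [? [? ?]] [? [? ?]]; split; [|split]; simpl; apply cont_plus; auto. Qed.
Lemma vc_sub f g x : vc f x -> vc g x -> vc (fun t => vsub (f t) (g t)) x.
Proof. intros [? [? ?]] [? [? ?]]; split; [|split]; simpl; apply cont_minus; auto. Qed.
Lemma vc_scale c f x : continuity_pt c x -> vc f x -> vc (fun t => vscale (c t) (f t)) x.
Proof. intros ? [? [? ?]]; split; [|split]; simpl; apply cont_mult; auto. Qed.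
Lemma vc_cross f g x : vc f x -> vc g x -> vc (fun t => cross (f t) (g t)) x.
Proof.
  intros [? [? ?]] [? [? ?]]; split; [|split]; simpl; apply cont_minus; apply cont_mult; auto.
Qed.
Lemma dot_continuous f g x : vc f x -> vc g x -> continuity_pt (fun t => dot (f t) (g t)) x.
Proof. intros [? [? ?]] [? [? ?]]; unfold dot; repeat apply cont_plus; apply cont_mult; auto. Qed.
Lemma vnorm_continuous f x : vc f x -> continuity_pt (fun t => vnorm (f t)) x.
Proof. intros H; unfold vnorm; apply cont_sqrt; [apply dot_continuous; auto | apply dot_ge0]. Qed.

Lemma peval_padd p q x : peval (padd p q) x = peval p x + peval q x.
Proof. revert q; induction p as [|a p IH]; intros [|b q]; simpl; try ring. rewrite IH; ring. Qed.
Lemma peval_pscale c p x : peval (pscale c p) x = c * peval p x.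
Proof. induction p as [|a p IH]; simpl; [ring|]. rewrite IH; ring. Qed.
Lemma peval_pmul p q x : peval (pmul p q) x = peval p x * peval q x.
Proof.
  induction p as [|a p IH]; simpl; [ring|].
  rewrite peval_padd, peval_pscale; simpl. rewrite IH; ring.
Qed.
Lemma peval_continuous p x : continuity_pt (fun t => peval p t) x.
Proof.
  induction p as [|a p IH]; simpl; [apply cont_const|].
  apply cont_plus; [apply cont_const | apply cont_mult; [apply cont_id | exact IH]].
Qed.

Definition rf_defined (f : rfun) (t : R) : Prop := peval (rden f) t <> 0.

Lemma rf_eval_continuous f x : rf_defined f x -> continuity_pt (fun t => rf_eval f t) x.
Proof. intros H; unfold rf_eval; apply cont_div; auto; apply peval_continuous. Qed.
Lemma rf_deriv_defined f x : rf_defined f x -> rf_defined (rf_deriv f) x.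
Proof.
  unfold rf_defined, rf_deriv; simpl; intros H.
  rewrite peval_pmul. apply Rmult_integral_contrapositive; auto.
Qed.

Definition curve_defined (C : rcurve) (t : R) : Prop :=
  rf_defined (cx C) t /\ rf_defined (cy C) t /\ rf_defined (cz C) t.

Lemma curve_continuous C x : curve_defined C x -> vc (ceval C) x.
Proof. intros [? [? ?]]; split; [|split]; simpl; apply rf_eval_continuous; auto. Qed.
Lemma cderiv_defined C x : curve_defined C x -> curve_defined (cderiv C) x.
Proof. intros [? [? ?]]; split; [|split]; simpl; apply rf_deriv_defined; auto. Qed.

Lemma alpha_continuous C x : curve_defined C x -> r1' C x <> v0 -> vc (alpha C) x.
Proof.
  intros H Hn. pose proof (curve_continuous _ _ (cderiv_defined _ _ H)) as V.
  unfold alpha. apply vc_scale; [|exact V].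
  apply cont_inv; [apply vnorm_continuous, V|]. pose proof (vnorm_pos _ Hn); lra.
Qed.

Lemma gamma_continuous C x :
  curve_defined C x -> cross (r1' C x) (r2' C x) <> v0 -> vc (gamma C) x.
Proof.
  intros H Hn. pose proof (cderiv_defined _ _ H) as H1.
  pose proof (cderiv_defined _ _ H1) as H2.
  assert (V : vc (fun t => cross (r1' C t) (r2' C t)) x)
    by (apply vc_cross; apply curve_continuous; auto).
  unfold gamma. apply vc_scale; auto.
  apply cont_inv; [apply vnorm_continuous, V|]. pose proof (vnorm_pos _ Hn); lra.
Qed.

Lemma noncharacter_regular C I t : dens_nonvanishing C I -> I t ->
  ~ character_param C I t ->
  curve_defined C t /\ r1' C t <> v0 /\ cross (r1' C t) (r2' C t) <> v0.
Proof.
  intros Hden It Hnc. destruct (Hden t It) as [Dx [Dy Dz]].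
  split; [split; [|split]; assumption|]. split.
  - intro E. apply Hnc. left. right. exact E.
  - intro E. apply Hnc. right. left. unfold curvature. rewrite E, vnorm_v0. unfold Rdiv. ring.
Qed.

Lemma continuous_llim f x : vc f x -> llim f x (f x).
Proof.
  intros [H1 [H2 H3]] eps He.
  destruct (continuity_pt_eps _ _ H1 (eps/2)) as [d1 [Hd1 F1]]; [lra|].
  destruct (continuity_pt_eps _ _ H2 (eps/2)) as [d2 [Hd2 F2]]; [lra|].
  destruct (continuity_pt_eps _ _ H3 (eps/2)) as [d3 [Hd3 F3]]; [lra|].
  exists (Rmin d1 (Rmin d2 d3)). split; [repeat apply Rmin_pos; auto|].
  intros t Ht.
  assert (Rabs (t - x) < d1 /\ Rabs (t - x) < d2 /\ Rabs (t - x) < d3) as [A1 [A2 A3]].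
  { pose proof (Rmin_l d1 (Rmin d2 d3)); pose proof (Rmin_r d1 (Rmin d2 d3));
    pose proof (Rmin_l d2 d3); pose proof (Rmin_r d2 d3).
    rewrite Rabs_left by lra. lra. }
  apply vnorm_lt_of_coords; simpl; auto.
Qed.

Lemma llim_coordinate_unique p f x l1 l2 : coordinate p ->
  llim f x l1 -> llim f x l2 -> p l1 = p l2.
Proof.
  intros [Hbound Hlin] H1 H2. apply cond_eq. intros eps He.
  destruct (H1 (eps/2)) as [d1 [Hd1 F1]]; [lra|].
  destruct (H2 (eps/2)) as [d2 [Hd2 F2]]; [lra|].
  pose proof (Rmin_l d1 d2); pose proof (Rmin_r d1 d2); pose proof (Rmin_pos d1 d2 Hd1 Hd2).
  set (t := x - Rmin d1 d2 / 2).
  assert (A : Rabs (p (f t) - p l1) < eps/2).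
  { rewrite <- Hlin. eapply Rle_lt_trans; [apply Hbound|]. apply F1. unfold t; lra. }
  assert (B : Rabs (p (f t) - p l2) < eps/2).
  { rewrite <- Hlin. eapply Rle_lt_trans; [apply Hbound|]. apply F2. unfold t; lra. }
  apply Rabs_def2 in A; apply Rabs_def2 in B. apply Rabs_def1; lra.
Qed.

Lemma llim_continuous_value f x l : vc f x -> llim f x l -> l = f x.
Proof.
  intros Hc Hl. pose proof (continuous_llim f x Hc) as Hv.
  destruct coordinates as [Px [Py Pz]].
  apply V3_coord_eq; [apply (llim_coordinate_unique vx f x)
                     | apply (llim_coordinate_unique vy f x)
                     | apply (llim_coordinate_unique vz f x)]; assumption.
Qed.

Lemma rlim_extension_continuous f s l :
  rlim f s l -> vc (fun t => if Rle_dec t s then l else f t) s.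
Proof.
  intros Hl.
  assert (G : forall p, coordinate p ->
    continuity_pt (fun t => p (if Rle_dec t s then l else f t)) s).
  { intros p [Hbound Hlin]. apply eps_continuity_pt. intros eps He.
    destruct (Hl eps He) as [d [Hd F]]. exists d; split; auto. intros t Ht.
    destruct (Rle_dec s s) as [_|N]; [|lra].
    destruct (Rle_dec t s).
    - replace (p l - p l) with 0 by ring. rewrite Rabs_R0; auto.
    - rewrite <- Hlin. eapply Rle_lt_trans; [apply Hbound|]. apply F.
      apply Rabs_def2 in Ht. lra. }
  destruct coordinates as [Px [Py Pz]].
  split; [|split]; [apply (G vx) | apply (G vy) | apply (G vz)]; assumption.
Qed.

Lemma rlim_dot_const f g s l m c : rlim f s l -> rlim g s m ->
  (forall t, s < t -> dot (f t) (g t) = c) -> dot l m = c.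
Proof.
  intros Hf Hg Hc.
  pose proof (dot_continuous _ _ s (rlim_extension_continuous f s l Hf)
                                   (rlim_extension_continuous g s m Hg)) as K.
  apply cond_eq. intros eps He.
  destruct (continuity_pt_eps _ _ K eps He) as [d [Hd F]].
  specialize (F (s + d/2)). cbv beta in F.
  destruct (Rle_dec s s) as [_|N]; [|lra].
  destruct (Rle_dec (s + d/2) s) as [N|_]; [lra|].
  rewrite Hc in F by lra. rewrite Rabs_minus_sym. apply F. rewrite Rabs_right; lra.
Qed.

Lemma same_sign phi a b : a < b -> (forall x, a <= x <= b -> continuity_pt phi x) ->
  (forall x, a <= x <= b -> phi x <> 0) -> 0 < phi a * phi b.
Proof.
  intros Hab Hc Hn.
  assert (Na := Hn a ltac:(lra)). assert (Nb := Hn b ltac:(lra)).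
  destruct (Rlt_or_le (phi a) 0) as [A1|A1]; destruct (Rlt_or_le (phi b) 0) as [B1|B1].
  - nra.
  - assert (0 < phi b) by lra. destruct (IVT_interv phi a b Hc Hab A1 H) as [z [Hz Hz0]].
    exfalso; apply (Hn z Hz Hz0).
  - assert (0 < phi a) by lra.
    destruct (IVT_interv (fun t => - phi t) a b) as [z [Hz Hz0]]; auto; try lra.
    + intros; apply (continuity_pt_opp phi); auto.
    + exfalso; apply (Hn z Hz); lra.
  - nra.
Qed.

Lemma dot_vsub_swap p q g : dot (vsub p q) g = - dot (vsub q p) g.
Proof. destruct p, q, g; unfold dot; simpl; ring. Qed.

Lemma dot_nonzero_vectors u v : dot u v <> 0 -> u <> v0 /\ v <> v0.
Proof.
  intros H; split; intro E; apply H; rewrite E; unfold dot, v0; simpl; ring.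
Qed.

Lemma alpha_gamma_orth C t : dot (alpha C t) (gamma C t) = 0.
Proof.
  unfold alpha, gamma. set (a := / vnorm _). set (b := / vnorm _).
  destruct (r1' C t), (r2' C t); unfold dot, cross, vscale; simpl; ring.
Qed.

Lemma limit_frame_orth C t a g :
  rlim (alpha C) t a -> rlim (gamma C) t g -> dot a g = 0.
Proof. intros Ha Hg. apply (rlim_dot_const _ _ _ _ _ _ Ha Hg). intros; apply alpha_gamma_orth. Qed.

Definition line_plane_meet (p d q n : V3) : V3 :=
  vadd p (vscale (dot (vsub q p) n / dot d n) d).

Lemma line_plane_meet_unique p d q n X : dot d n <> 0 ->
  on_line p d X -> on_plane q n X -> X = line_plane_meet p d q n.
Proof.
  intros Hdn [lam ->] HX. unfold line_plane_meet. do 2 f_equal.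
  assert (E : lam * dot d n = dot (vsub q p) n)
    by (destruct p, d, q, n; unfold on_plane, dot, vsub, vadd, vscale in *; simpl in *; nra).
  rewrite <- E. field. exact Hdn.
Qed.

Lemma line_plane_meet_on_plane p d q n : dot d n <> 0 -> on_plane q n (line_plane_meet p d q n).
Proof.
  intros H. destruct p, d, q, n.
  unfold on_plane, line_plane_meet, dot, vsub, vadd, vscale in *; simpl in *. field. exact H.
Qed.

Lemma line_plane_meet_continuous p d q n x : vc p x -> vc d x -> vc q x -> vc n x ->
  dot (d x) (n x) <> 0 -> vc (fun t => line_plane_meet (p t) (d t) (q t) (n t)) x.
Proof.
  intros Hp Hd Hq Hn Hdn. unfold line_plane_meet.
  apply vc_add; [exact Hp|]. apply vc_scale; [|exact Hd].
  apply cont_div; [apply dot_continuous; [apply vc_sub|]| apply dot_continuous |]; auto.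
Qed.

Lemma same_side_on_line_scaled p d lam mu : d <> v0 -> 0 < lam * mu ->
  same_side_on_line p (vadd p (vscale lam d)) (vadd p (vscale mu d)).
Proof.
  intros Hd Hpos. assert (Hlam : lam <> 0) by (intro; subst; lra). split.
  - intro E. apply Hd. destruct p as [px py pz], d as [dx dy dz].
    unfold vadd, vscale in E; simpl in E. injection E as Ex Ey Ez.
    assert (Z : forall c, lam * c = 0 -> c = 0)
      by (intros c Hc; destruct (Rmult_integral _ _ Hc); [contradiction | assumption]).
    unfold v0; f_equal; apply Z; lra.
  - exists (mu / lam). split.
    + replace (mu / lam) with (lam * mu / (lam * lam)) by (field; exact Hlam).
      apply Rdiv_lt_0_compat; [exact Hpos | nra].
    + destruct p, d; unfold vsub, vadd, vscale; simpl; f_equal; field; exact Hlam.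
Qed.

(* If a and x are both orthogonal to n <> 0, then det(a,x,.) vanishes on n
   only if it vanishes identically: (n.n) det(a,x,w) = (n.w) det(a,x,n). *)
Lemma det3_normal_nonzero a x w n : dot a n = 0 -> dot x n = 0 -> n <> v0 ->
  det3 a x w <> 0 -> det3 a x n <> 0.
Proof.
  intros Han Hxn Hn Hw Z. apply Hw.
  assert (Id : dot n n * det3 a x w =
               dot n w * det3 a x n - dot x n * det3 n a w + dot a n * det3 n x w)
    by (destruct a, x, w, n; unfold det3, dot, cross; simpl; ring).
  rewrite Z, Hxn, Han in Id. pose proof (dot_pos n Hn).
  apply (Rmult_eq_reg_l (dot n n)); [rewrite Id; ring | lra].
Qed.

Lemma det3_shift a p q c w : det3 a (vsub (vadd p (vscale c w)) q) w = det3 a (vsub p q) w.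
Proof. destruct a, p, q, w; unfold det3, dot, cross, vsub, vadd, vscale; simpl; ring. Qed.

Section AdmissibleSegment.
Context {C : rcurve} {I : R -> Prop} {t0 t1 : R} {a0 g0 : V3}.
Hypothesis Hint : is_interval I.
Hypothesis Hden : dens_nonvanishing C I.
Hypothesis Had : admissible C I t0 t1.
Hypothesis Ha0 : rlim (alpha C) t0 a0.
Hypothesis Hg0 : rlim (gamma C) t0 g0.

Lemma segment_continuous s : t0 < s <= t1 ->
  vc (r0' C) s /\ vc (alpha C) s /\ vc (gamma C) s.
Proof.
  intros Hs. destruct Had as [I0 [I1 [_ [Hnc _]]]].
  assert (Is : I s) by (apply (Hint t0 s t1); auto; lra).
  destruct (noncharacter_regular C I s Hden Is (Hnc s Hs)) as [D [N1 N2]].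
  split; [exact (curve_continuous C s D) | split].
  - exact (alpha_continuous C s D N1).
  - exact (gamma_continuous C s D N2).
Qed.

Lemma segment_conditions s : t0 < s <= t1 ->
  (dot a0 (gamma C s) <> 0 /\ dot (alpha C s) g0 <> 0) /\
  det3 a0 (vsub (r0' C s) (r0' C t0)) (alpha C s) <> 0 /\
  dot (vsub (r0' C t0) (r0' C s)) (gamma C s) <> 0.
Proof.
  intros Hs. destruct (segment_continuous s Hs) as [_ [A G]].
  destruct Had as [_ [_ [_ [_ [Hcond _]]]]].
  destruct (Hcond t0 s ltac:(lra) ltac:(lra) ltac:(lra) a0 g0 (alpha C s) (gamma C s)
              Ha0 Hg0 (continuous_llim _ _ A) (continuous_llim _ _ G))
    as [HI [HII [HIII _]]].
  split; [exact HI | split; [exact HII | exact HIII]].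
Qed.

(* Signed abscissa, along T^+(t0) in units of a0, of T^+(t0) cut by O(s). *)
Definition tangent_abscissa (s : R) : R :=
  dot (vsub (r0' C s) (r0' C t0)) (gamma C s) / dot a0 (gamma C s).

(* T(s) cut by O^+(t0), and its signed offset from T^+(t0) within O^+(t0). *)
Definition osculating_vertex (s : R) : V3 :=
  line_plane_meet (r0' C s) (alpha C s) (r0' C t0) g0.
Definition osculating_offset (s : R) : R :=
  det3 a0 (vsub (osculating_vertex s) (r0' C t0)) g0.

Lemma tangent_vertex s X : t0 < s <= t1 -> tet_v1 C t0 s a0 g0 (gamma C s) X ->
  X = vadd (r0' C t0) (vscale (tangent_abscissa s) a0).
Proof.
  intros Hs [HL [_ HP]]. destruct (segment_conditions s Hs) as [[Hag _] _].
  exact (line_plane_meet_unique _ _ _ _ _ Hag HL HP).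
Qed.

Lemma osculating_vertex_eq s X : t0 < s <= t1 ->
  tet_v2 C t0 s g0 (alpha C s) (gamma C s) X -> X = osculating_vertex s.
Proof.
  intros Hs [HL [HP _]]. destruct (segment_conditions s Hs) as [[_ Hag] _].
  exact (line_plane_meet_unique _ _ _ _ _ Hag HL HP).
Qed.

(* By (III) the vertex is never r(t0), by (I) it is never at infinity. *)
Lemma tangent_abscissa_nonzero s : t0 < s <= t1 -> tangent_abscissa s <> 0.
Proof.
  intros Hs Z. destruct (segment_conditions s Hs) as [[Hag _] [_ HIII]].
  unfold tangent_abscissa, Rdiv in Z. apply Rmult_integral in Z as [Z|Z].
  - apply HIII. rewrite dot_vsub_swap, Z. ring.
  - exact (Rinv_neq_0_compat _ Hag Z).
Qed.

(* By (II) the vertex never lies on T^+(t0). *)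
Lemma osculating_offset_nonzero s : t0 < s <= t1 -> osculating_offset s <> 0.
Proof.
  intros Hs. destruct (segment_conditions s Hs) as [[_ Hag] [HII _]].
  apply det3_normal_nonzero with (w := alpha C s).
  - exact (limit_frame_orth C t0 a0 g0 Ha0 Hg0).
  - exact (line_plane_meet_on_plane _ _ _ _ Hag).
  - exact (proj2 (dot_nonzero_vectors _ _ Hag)).
  - unfold osculating_vertex, line_plane_meet. rewrite det3_shift. exact HII.
Qed.

Lemma tangent_vertices_same_side ts : t0 < ts < t1 ->
  same_side_on_line (r0' C t0) (vadd (r0' C t0) (vscale (tangent_abscissa t1) a0))
                               (vadd (r0' C t0) (vscale (tangent_abscissa ts) a0)).
Proof.
  intros Hts. apply same_side_on_line_scaled.
  - destruct (segment_conditions t1 ltac:(lra)) as [[Hag _] _].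
    exact (proj1 (dot_nonzero_vectors _ _ Hag)).
  - rewrite Rmult_comm. apply same_sign; [lra | intros x Hx |
                                          intros x Hx; apply tangent_abscissa_nonzero; lra].
    destruct (segment_continuous x ltac:(lra)) as [Rc [_ Gc]].
    destruct (segment_conditions x ltac:(lra)) as [[Hag _] _].
    unfold tangent_abscissa. apply cont_div; [| | exact Hag]; apply dot_continuous;
      auto using vc_sub, vc_const.
Qed.

Lemma osculating_vertices_same_side ts : t0 < ts < t1 ->
  same_side_in_plane (r0' C t0) a0 g0 (osculating_vertex t1) (osculating_vertex ts).
Proof.
  intros Hts. change (osculating_offset t1 * osculating_offset ts > 0).
  rewrite Rmult_comm. apply same_sign; [lra | intros x Hx |
                                        intros x Hx; apply osculating_offset_nonzero; lra].
  destruct (segment_continuous x ltac:(lra)) as [Rc [Ac _]].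
  destruct (segment_conditions x ltac:(lra)) as [[_ Hag] _].
  unfold osculating_offset, det3. apply dot_continuous; [|apply vc_const].
  apply vc_cross; [apply vc_const|]. apply vc_sub; [|apply vc_const].
  unfold osculating_vertex. apply line_plane_meet_continuous; auto using vc_const.
Qed.

End AdmissibleSegment.

Theorem lemma3 (C : rcurve) (I : R -> Prop) (t0 t1 : R) :
  standing C I ->
  admissible C I t0 t1 ->
  forall ts : R, t0 < ts < t1 ->
  forall a0 g0 a1 g1 as_ gs : V3,
    rlim (alpha C) t0 a0 -> rlim (gamma C) t0 g0 ->
    llim (alpha C) t1 a1 -> llim (gamma C) t1 g1 ->
    llim (alpha C) ts as_ -> llim (gamma C) ts gs ->
  forall P1 P2 Q1 Q2 : V3,
    tet_v1 C t0 t1 a0 g0 g1 P1 -> tet_v2 C t0 t1 g0 a1 g1 P2 ->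
    tet_v1 C t0 ts a0 g0 gs Q1 -> tet_v2 C t0 ts g0 as_ gs Q2 ->
    same_side_on_line (r0' C t0) P1 Q1 /\
    same_side_in_plane (r0' C t0) a0 g0 P2 Q2.
Proof.
  intros [Hint [Hden _]] Had ts Hts a0 g0 a1 g1 as_ gs Ha0 Hg0 Ha1 Hg1 Has Hgs
         P1 P2 Q1 Q2 HP1 HP2 HQ1 HQ2.
  assert (Ht1 : t0 < t1 <= t1) by lra.
  assert (Hts' : t0 < ts <= t1) by lra.
  (* the given left limits at t1 and ts are the values of alpha and gamma *)
  destruct (segment_continuous Hint Hden Had t1 Ht1) as [_ [A1 G1]].
  destruct (segment_continuous Hint Hden Had ts Hts') as [_ [As Gs]].
  rewrite (llim_continuous_value _ _ _ A1 Ha1), (llim_continuous_value _ _ _ G1 Hg1) in *.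
  rewrite (llim_continuous_value _ _ _ As Has), (llim_continuous_value _ _ _ Gs Hgs) in *.
  rewrite (tangent_vertex Hint Hden Had Ha0 Hg0 t1 P1 Ht1 HP1),
          (tangent_vertex Hint Hden Had Ha0 Hg0 ts Q1 Hts' HQ1),
          (osculating_vertex_eq Hint Hden Had Ha0 Hg0 t1 P2 Ht1 HP2),
          (osculating_vertex_eq Hint Hden Had Ha0 Hg0 ts Q2 Hts' HQ2).
  split.
  - exact (tangent_vertices_same_side Hint Hden Had Ha0 Hg0 ts Hts).
  - exact (osculating_vertices_same_side Hint Hden Had Ha0 Hg0 ts Hts).
Qed.
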